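(* Suppose the e-values are valid, i.e. $\mathbb{E}[e_t\mid\mathcal{F}_{t-1}]\le1$ a.s. whenever $\theta_t=0$, and let $(\lambda_t)_{t\ge1}$ be a sequence of random variables with values in $(0,1)$ such that each $\lambda_t$ is $\mathcal{F}_{t-1}$-measurable. Define $$\widehat{\mathrm{FDP}}^{\mathrm{SAFFRON}}_{\mathrm{e}}(t)=\sum_{j=1}^t\frac{\alpha_j}{R_{j-1}+1}\cdot\frac{\mathbb{1}\{e_j<1/\lambda_j\}}{1-\lambda_j},\qquad \mathrm{FDP}^*_{\mathrm{e}}(t)=\sum_{j\in\mathcal{H}_0(t)}\frac{\alpha_j}{R_{j-1}+1}.$$ Then (a) $\mathbb{E}[\widehat{\mathrm{FDP}}^{\mathrm{SAFFRON}}_{\mathrm{e}}(t)]\ge\mathbb{E}[\mathrm{FDP}^*_{\mathrm{e}}(t)]$ for all $t\ge1$; and (b) if the $\mathcal{F}_{t-1}$-measurable testing levels satisfy $\widehat{\mathrm{FDP}}^{\mathrm{SAFFRON}}_{\mathrm{e}}(t)\le\alpha$ almost surely for every $t\ge1$, then $\mathrm{FDR}(t)\le\alpha$ for all $t\ge1$.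
   Context: Let $\alpha\in(0,1)$ be a target level. Hypotheses are indexed by $t=1,2,\dots$; $\theta_t\in\{0,1\}$ is a fixed (non-random) indicator with $\theta_t=0$ iff the $t$-th null hypothesis is true. $e_1,e_2,\dots$ are nonnegative random variables (e-values). Testing levels $\alpha_1,\alpha_2,\dots$ are nonnegative random variables and the decisions are $\delta_t=\mathbb{1}\{e_t\ge 1/\alpha_t\}$ (with $\delta_t=0$ when $\alpha_t=0$). Let $\mathcal{F}_t=\sigma(\delta_1,\dots,\delta_t)$, $\mathcal{F}_0$ trivial; each $\alpha_t$ is required to be $\mathcal{F}_{t-1}$-measurable. $R_t=\sum_{j=1}^t\delta_j$, $R_0=0$. $\mathcal{H}_0(t)=\{j\le t:\theta_j=0\}$. $\mathrm{FDR}(t)=\mathbb{E}\big[\sum_{j\in\mathcal{H}_0(t)}\delta_j/(R_t\vee 1)\big]$. *)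

From HB Require Import structures.
From mathcomp Require Import all_boot all_order all_algebra.
From mathcomp Require Import all_classical all_reals all_analysis.
Set Implicit Arguments. Unset Strict Implicit. Unset Printing Implicit Defensive.
Import Order.TTheory GRing.Theory Num.Theory.
Local Open Scope classical_set_scope.
Local Open Scope ring_scope.

Section OnlineEFDR.
Variables (d : measure_display) (T : measurableType d) (R : realType).

(* decision delta_t = 1{ e_t >= 1/alpha_t }, with delta_t = 0 when alpha_t = 0;
   hypotheses are indexed t = 1,2,...; index 0 is unused. *)
Definition delta (alpha e : nat -> T -> R) (t : nat) (w : T) : R :=
  if (0 < alpha t w) && (1 / alpha t w <= e t w) then 1 else 0.

Definition Rej (alpha e : nat -> T -> R) (t : nat) (w : T) : R :=
  \sum_(1 <= j < t.+1) delta alpha e j w.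

Definition filt (alpha e : nat -> T -> R) (t : nat) : set (set T) :=
  <<s [set A | exists j (B : set R),
        [/\ (1 <= j <= t)%N, measurable B & A = delta alpha e j @^-1` B] ] >>.

Definition meas_wrt (G : set (set T)) (f : T -> R) : Prop :=
  forall B : set R, measurable B -> G (f @^-1` B).

(* theta j = false  iff  the j-th null hypothesis is true *)
Definition FDPhat_saffron (alpha e lambda : nat -> T -> R) (t : nat) (w : T) : R :=
  \sum_(1 <= j < t.+1)
     (alpha j w / (Rej alpha e j.-1 w + 1)) *
     ((if e j w < 1 / lambda j w then 1 else 0) / (1 - lambda j w)).

Definition FDPstar (theta : nat -> bool) (alpha e : nat -> T -> R) (t : nat) (w : T) : R :=
  \sum_(1 <= j < t.+1 | ~~ theta j) alpha j w / (Rej alpha e j.-1 w + 1).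

Definition FDP (theta : nat -> bool) (alpha e : nat -> T -> R) (t : nat) (w : T) : R :=
  (\sum_(1 <= j < t.+1 | ~~ theta j) delta alpha e j w) / Num.max (Rej alpha e t w) 1.

End OnlineEFDR.

From HB Require Import structures.
From mathcomp Require Import all_boot all_order all_algebra.
From mathcomp Require Import all_classical all_reals all_analysis.
From mathcomp Require Import measurable_realfun finmap.
Set Implicit Arguments. Unset Strict Implicit. Unset Printing Implicit Defensive.
Import Order.TTheory GRing.Theory Num.Theory.
Local Open Scope classical_set_scope.
Local Open Scope ring_scope.

(* Two facts about an e-value e that is valid for a sigma-algebra G, i.e.
   int_A e dP <= P A for every A in G, drive the argument.  First, validity
   extends from indicators to simple functions and then, by monotone
   convergence, to every nonnegative G-measurable weight g: E[g e] <= E[g].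
   Second, for G-measurable c >= 0 and l in (0,1),
   E[c] <= E[c 1{e < 1/l} / (1 - l)]: with q = c / (1 - l) we have pointwise
   q <= q 1{e < 1/l} + q l e, and E[q l e] <= E[q l], so E[q (1 - l)] is at most
   E[q 1{e < 1/l}].  Both facts are used with G = F_{j-1} and the predictable
   weight c_j = alpha_j / (R_{j-1} + 1).  The second one gives (a) term by term.
   For (b), delta_j = 1 forces alpha_j e_j >= 1 and R_t >= R_{j-1} + 1, so
   FDP(t) <= sum over null j <= t of c_j e_j, whose expectation is at most
   E[FDP*(t)] <= E[FDPhat(t)] <= alpha by the first fact. *)

Lemma measurable_inv (R : realType) : measurable_fun setT (@GRing.inv R).
Proof.
rewrite -(setUv [set (0:R)]) setUC.
apply/measurable_funU => //; first exact: measurableC.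
split; last exact: measurable_fun_set1.
apply: open_continuous_measurable_fun.
  exact/closed_openC/(accessible_closed_set1 (hausdorff_accessible (@Rhausdorff R))).
by move=> x /set_mem /= x0; apply: inv_continuous; exact/eqP.
Qed.

Section measurable_realfun_extra.
Context d (T : measurableType d) (R : realType).
Implicit Types f g : T -> R.

Lemma measurable_funV f : measurable_fun setT f ->
  measurable_fun setT (fun w => (f w)^-1).
Proof. by move=> mf; exact: measurableT_comp (@measurable_inv R) mf. Qed.

Lemma measurable_fun_lt_inv f g : measurable_fun setT f -> measurable_fun setT g ->
  measurable_fun setT (fun w => if f w < 1 / g w then 1 else 0 : R).
Proof.
move=> mf mg; apply: measurable_fun_ifT => //; apply: measurable_fun_ltr => //.
exact/measurable_funM/measurable_funV.
Qed.

End measurable_realfun_extra.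

Lemma saffron_pointwise (R : realFieldType) (q l x : R) : 0 <= q -> 0 < l -> 0 <= x ->
  q <= q * (if x < 1 / l then 1 else 0) + q * l * x.
Proof.
move=> q0 l0 x0; case: ifPn => [_|]; first by rewrite mulr1 lerDl !mulr_ge0 // ltW.
rewrite -leNgt ler_pdivrMr // mulrC => lx1.
by rewrite mulr0 add0r -mulrA ler_peMr.
Qed.

Section probability_extra.
Context d (T : measurableType d) (R : realType) (P : probability T R).

Lemma integral_bounded_fin_num (f : T -> R) (M : R) : measurable_fun setT f ->
  (forall w, 0 <= f w <= M) -> (\int[P]_w (f w)%:E)%E \is a fin_num.
Proof.
move=> mf fM; have f0 w : 0 <= f w by case/andP: (fM w).
rewrite ge0_fin_numE; last by apply: integral_ge0 => w _; rewrite lee_fin.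
apply: (@le_lt_trans _ _ (\int[P]_w M%:E)%E); last first.
  by rewrite integral_cst // [X in (_ * X)%E]probability_setT mule1 ltry.
apply: ge0_le_integral => //.
- by move=> w _; rewrite lee_fin.
- exact/measurable_EFinP.
- by move=> w _; rewrite lee_fin; case/andP: (fM w).
Qed.

Lemma integral_le_ae_bound (f : T -> R) (a : R) : 0 <= a -> measurable_fun setT f ->
  (forall w, 0 <= f w) -> {ae P, forall w, f w <= a} ->
  (\int[P]_w (f w)%:E <= a%:E)%E.
Proof.
move=> a0 mf f0 fa; apply: (@le_trans _ _ (\int[P]_w (cst a%:E) w)%E).
  apply: ae_ge0_le_integral => //.
  - by move=> w _; rewrite lee_fin.
  - exact/measurable_EFinP.
  by apply: filterS fa => w h _; rewrite lee_fin.
by rewrite integral_cst // [X in (_ * X)%E]probability_setT mule1.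
Qed.

End probability_extra.

Section sigma_sub.
Context d (T : measurableType d) (R : realType) (G : set (set T)).
Hypothesis G_measurable : G `<=` measurable.

Lemma sigma_sub_measurable : <<s G>> `<=` measurable.
Proof. by apply: smallest_sub => //; exact: sigma_algebra_measurable. Qed.

Lemma measurable_fun_sigma_sub (f : T -> R) :
  measurable_fun [set: g_sigma_algebraType G] f -> measurable_fun [set: T] f.
Proof. by move=> mf _ B mB; apply: sigma_sub_measurable; exact: mf. Qed.

End sigma_sub.

Import HBNNSimple.

Section evalue_validity.
Context d (T : measurableType d) (R : realType) (P : probability T R).
Variables (G : set (set T)) (e : T -> R).
Hypothesis G_measurable : G `<=` measurable.
Hypothesis me : measurable_fun setT e.
Hypothesis e_ge0 : forall w, 0 <= e w.
Hypothesis e_valid : forall A, <<s G>> A -> (\int[P]_(w in A) (e w)%:E <= P A)%E.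

Local Notation GT := (g_sigma_algebraType G).

Let measurable_sub (f : T -> R) :
  measurable_fun [set: GT] f -> measurable_fun [set: T] f.
Proof. exact: measurable_fun_sigma_sub. Qed.

Lemma integral_indic_mul_evalue_le (c : R) (A : set T) : 0 <= c -> <<s G>> A ->
  (\int[P]_w ((c * \1_A w) * e w)%:E <= \int[P]_w (c * \1_A w)%:E)%E.
Proof.
move=> c0 GA; have mA := sigma_sub_measurable G_measurable GA.
have mi : measurable_fun setT (\1_A : T -> R) by exact: measurable_indic.
under eq_integral do rewrite -mulrA EFinM.
under [X in (_ <= X)%E]eq_integral do rewrite EFinM.
rewrite ge0_integralZl_EFin //; last 2 first.
- by move=> w _; rewrite lee_fin mulr_ge0.
- exact/measurable_EFinP/measurable_funM.
rewrite ge0_integralZl_EFin //; last exact/measurable_EFinP.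
rewrite integral_indic // setIT; apply: lee_wpmul2l; first by rewrite lee_fin.
suff -> : (\int[P]_w (\1_A w * e w)%:E = \int[P]_(w in A) (e w)%:E)%E.
  exact: e_valid.
rewrite [RHS]integral_mkcond; apply: eq_integral => w _.
by rewrite /patch indicE; case: ifP; rewrite ?mul1r ?mul0r.
Qed.

Lemma integral_sum_indic_mul_evalue_le (I : Type) (s : seq I) (c : I -> R)
    (A : I -> set T) :
  (forall i, 0 <= c i) -> (forall i, <<s G>> (A i)) ->
  (\int[P]_w ((\sum_(i <- s) c i * \1_(A i) w) * e w)%:E
     <= \int[P]_w (\sum_(i <- s) c i * \1_(A i) w)%:E)%E.
Proof.
move=> c0 GA.
have mi i : measurable_fun setT (\1_(A i) : T -> R).
  exact/measurable_indic/(sigma_sub_measurable G_measurable).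
under eq_integral do rewrite mulr_suml -sumEFin.
under [X in (_ <= X)%E]eq_integral do rewrite -sumEFin.
rewrite ge0_integral_sum //; last 2 first.
- by move=> i; apply/measurable_EFinP/measurable_funM => //; exact: measurable_funM.
- by move=> i w _; rewrite lee_fin !mulr_ge0.
rewrite ge0_integral_sum //; last 2 first.
- by move=> i; apply/measurable_EFinP/measurable_funM.
- by move=> i w _; rewrite lee_fin !mulr_ge0.
by apply: lee_sum => i _; exact: integral_indic_mul_evalue_le.
Qed.

Lemma integral_nnsfun_mul_evalue_le (h : {nnsfun GT >-> R}) :
  (\int[P]_w (h w * e w)%:E <= \int[P]_w (h w)%:E)%E.
Proof.
pose s := fset_set (h @` setT).
have hE (w : GT) : h w =
    \sum_(i < #|`s|%fset) Num.max (s`_i) 0 * \1_(h @^-1` [set s`_i]) w.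
  rewrite (fimfunEord h w); apply: eq_bigr => i _.
  rewrite indicE; case: (boolP (w \in _)); rewrite ?mulr0 ?mulr1 // => /set_mem /= <-.
  by rewrite max_l.
under eq_integral do rewrite hE.
under [X in (_ <= X)%E]eq_integral do rewrite hE.
apply: integral_sum_indic_mul_evalue_le => i; first by rewrite le_max lexx orbT.
exact: (measurable_funPTI h).
Qed.

Lemma integral_mul_evalue_le (g : T -> R) : measurable_fun [set: GT] g ->
  (forall w, 0 <= g w) -> (\int[P]_w (g w * e w)%:E <= \int[P]_w (g w)%:E)%E.
Proof.
move=> mg g0.
have mgE : measurable_fun [set: GT] (EFin \o g) by exact/measurable_EFinP.
pose h := nnsfun_approx measurableT mgE.
pose hf n : T -> R := fun x : GT => h n x.
have mh n : measurable_fun [set: T] (hf n).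
  by apply: measurable_sub; exact: measurable_funPT.
have hcvg x : EFin \o (hf ^~ x) @ \oo --> (g x)%:E.
  apply: (@cvg_nnsfun_approx _ GT R setT measurableT (EFin \o g) mgE) => // y _.
  by rewrite lee_fin.
have hnd x : nondecreasing_seq (hf ^~ x).
  by move=> m n mn; exact/lefP/(nd_nnsfun_approx measurableT mgE mn).
have mcvg (k : T -> R) : measurable_fun setT k -> (forall w, 0 <= k w) ->
    (\int[P]_w (hf n w * k w)%:E)%E @[n --> \oo] --> (\int[P]_w (g w * k w)%:E)%E.
  move=> mk k0; have -> : (\int[P]_w (g w * k w)%:E =
      \int[P]_w (limn (fun n => (hf n w * k w)%:E) : \bar R))%E.
    apply: eq_integral => w _; apply/esym/cvg_lim => //.
    under eq_fun do rewrite EFinM.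
    by rewrite EFinM; apply: cvgeM; [exact: mule_def_fin|exact: hcvg|exact: cvg_cst].
  apply: cvg_monotone_convergence => //.
  - by move=> n; apply/measurable_EFinP/measurable_funM.
  - by move=> n w _; rewrite lee_fin mulr_ge0.
  - by move=> w _ m n mn; rewrite lee_fin ler_wpM2r // hnd.
have L1 := mcvg e me e_ge0.
have L2 : (\int[P]_w (hf n w)%:E)%E @[n --> \oo] --> (\int[P]_w (g w)%:E)%E.
  have mul1 (f : T -> R) : (\int[P]_w (f w * cst 1 w)%:E = \int[P]_w (f w)%:E)%E.
    by apply: eq_integral => w _; rewrite mulr1.
  rewrite -(mul1 g); under eq_fun do rewrite -(mul1 (hf _)).
  exact: mcvg (cst 1) (measurable_cst _) (fun=> ler01).
apply: (lee_cvg_to L1 L2); near=> n; exact: integral_nnsfun_mul_evalue_le.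
Unshelve. all: by end_near.
Qed.

Lemma integral_saffron_bounded (q l : T -> R) (M : R) :
  measurable_fun [set: GT] q -> (forall w, 0 <= q w <= M) ->
  measurable_fun [set: GT] l -> (forall w, 0 < l w < 1) ->
  (\int[P]_w (q w * (1 - l w))%:E <=
   \int[P]_w (q w * (if e w < 1 / l w then 1 else 0))%:E)%E.
Proof.
move=> mq qM ml l01.
have q0 w : 0 <= q w by case/andP: (qM w).
have l0 w : 0 < l w by case/andP: (l01 w).
have l1 w : l w <= 1 by case/andP: (l01 w) => _ /ltW.
have [mqT mlT] := (measurable_sub mq, measurable_sub ml).
have ql0 w : 0 <= q w * l w by rewrite mulr_ge0 // ltW.
have mql : measurable_fun [set: T] (fun w => q w * l w) by exact: measurable_funM.
have mind := measurable_fun_lt_inv me mlT.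
have ql_fin : (\int[P]_w (q w * l w)%:E)%E \is a fin_num.
  apply: (@integral_bounded_fin_num _ _ _ _ _ M) => // w.
  by rewrite ql0 /= (le_trans (ler_piMr (q0 w) (l1 w))) //; case/andP: (qM w).
have split_q : (\int[P]_w (q w * (1 - l w))%:E + \int[P]_w (q w * l w)%:E =
                 \int[P]_w (q w)%:E)%E.
  rewrite -ge0_integralD //.
  - by apply: eq_integral => w _; rewrite -EFinD -mulrDr subrK mulr1.
  - by move=> w _; rewrite lee_fin mulr_ge0 // subr_ge0.
  - by apply/measurable_EFinP/measurable_funM => //; exact: measurable_funB.
  - by move=> w _; rewrite lee_fin.
  - exact/measurable_EFinP.
rewrite -(leeD2rE _ _ ql_fin) split_q.
apply: (@le_trans _ _ (\int[P]_w (q w * (if e w < 1 / l w then 1 else 0)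
                                 + q w * l w * e w)%:E)%E).
  apply: ge0_le_integral => //.
  - by move=> w _; rewrite lee_fin.
  - exact/measurable_EFinP.
  - by apply/measurable_EFinP/measurable_funD; exact: measurable_funM.
  by move=> w _; rewrite lee_fin saffron_pointwise.
under eq_integral do rewrite EFinD.
rewrite ge0_integralD //; first last.
- by apply/measurable_EFinP/measurable_funM.
- by move=> w _; rewrite lee_fin mulr_ge0.
- exact/measurable_EFinP/measurable_funM.
- by move=> w _; rewrite lee_fin mulr_ge0 //; case: ifP.
by rewrite leeD2l //; apply: integral_mul_evalue_le => //; exact: measurable_funM.
Qed.

Lemma integral_le_saffron (c l : T -> R) :
  measurable_fun [set: GT] c -> (forall w, 0 <= c w) ->
  measurable_fun [set: GT] l -> (forall w, 0 < l w < 1) ->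
  (\int[P]_w (c w)%:E <=
   \int[P]_w (c w * ((if e w < 1 / l w then 1 else 0) / (1 - l w)))%:E)%E.
Proof.
move=> mc c0 ml l01.
have l1 w : 0 < 1 - l w by case/andP: (l01 w) => _; rewrite subr_gt0.
pose ind w : R := if e w < 1 / l w then 1 else 0.
pose q w := c w / (1 - l w).
have q0 w : 0 <= q w by rewrite divr_ge0 // ltW.
have mq : measurable_fun [set: GT] q.
  exact/measurable_funM/measurable_funV/measurable_funB.
pose qn (n : nat) w := Num.min (q w) n%:R.
have qn0 n w : 0 <= qn n w by rewrite le_min q0 ler0n.
have mqn n : measurable_fun [set: GT] (qn n) by exact: measurable_minr.
have mind : measurable_fun [set: T] ind.
  exact/measurable_fun_lt_inv/measurable_sub.
(* Truncating q keeps integral_saffron_bounded applicable; monotone convergence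
   removes the truncation. *)
have qn_le n : (\int[P]_w (qn n w * (1 - l w))%:E <=
    \int[P]_w (c w * (ind w / (1 - l w)))%:E)%E.
  apply: le_trans (integral_saffron_bounded (M := n%:R) (mqn n) _ ml l01) _.
    by move=> w; rewrite qn0 ge_min lexx orbT.
  apply: ge0_le_integral => //.
  - by move=> w _; rewrite lee_fin mulr_ge0 //; case: ifP.
  - by apply/measurable_EFinP/measurable_funM => //; exact: measurable_sub.
  - apply/measurable_EFinP/measurable_funM; first exact: measurable_sub.
    exact/measurable_funM/measurable_funV/measurable_funB/measurable_sub.
  move=> w _; rewrite lee_fin mulrA mulrAC -/(q w) ler_wpM2r ?ge_min ?lexx //.
  by rewrite /ind; case: ifP.
have qn_cvg : (\int[P]_w (qn n w * (1 - l w))%:E)%E @[n --> \oo] -->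
    (\int[P]_w (c w)%:E)%E.
  have -> : (\int[P]_w (c w)%:E =
      \int[P]_w (limn (fun n => (qn n w * (1 - l w))%:E) : \bar R))%E.
    apply: eq_integral => w _; apply/esym/cvg_lim => //; apply: cvg_near_cst.
    near=> n; rewrite /qn min_l ?divfK ?gt_eqF //.
    near: n; exists (Num.truncn (q w)).+1 => // m /= qm.
    by rewrite ltW // (lt_le_trans (truncnS_gt _)) // ler_nat.
  apply: cvg_monotone_convergence => //.
  - move=> n; apply/measurable_EFinP/measurable_funM; first exact: measurable_sub.
    exact/measurable_funB/measurable_sub.
  - by move=> n w _; rewrite lee_fin mulr_ge0 // ltW.
  - move=> w _ m n mn; rewrite lee_fin ler_wpM2r ?(ltW (l1 w)) //.
    by rewrite /qn le_min !ge_min lexx ler_nat mn !orbT.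
by apply: (lee_cvg_to qn_cvg (cvg_cst _)); near=> n; exact: qn_le.
Unshelve. all: by end_near.
Qed.

End evalue_validity.

Section filtration.
Context d (T : measurableType d) (R : realType).
Variables (alpha e : nat -> T -> R).
Hypothesis malpha : forall t, measurable_fun setT (alpha t).
Hypothesis me : forall t, measurable_fun setT (e t).

(* filt alpha e t is convertible to <<s filt_gen t>>. *)
Definition filt_gen t : set (set T) := [set A | exists j (B : set R),
  [/\ (1 <= j <= t)%N, measurable B & A = delta alpha e j @^-1` B] ].

Local Notation FT t := (g_sigma_algebraType (filt_gen t)).

Lemma delta01 j w : delta alpha e j w = 0 \/ delta alpha e j w = 1.
Proof. by rewrite /delta; case: ifP; [right|left]. Qed.

Lemma delta_ge0 j w : 0 <= delta alpha e j w.
Proof. by case: (delta01 j w) => ->. Qed.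

Lemma RejS t w : Rej alpha e t.+1 w = Rej alpha e t w + delta alpha e t.+1 w.
Proof. by rewrite /Rej big_nat_recr. Qed.

Lemma Rej_ge0 t w : 0 <= Rej alpha e t w.
Proof. by apply: sumr_ge0 => i _; exact: delta_ge0. Qed.

Lemma Rej_add1_gt0 t w : 0 < Rej alpha e t w + 1.
Proof. by rewrite ltr_wpDl // Rej_ge0. Qed.

Lemma Rej_le t t' w : (t <= t')%N -> Rej alpha e t w <= Rej alpha e t' w.
Proof.
elim: t' => [|t' IH]; first by rewrite leqn0 => /eqP ->.
rewrite leq_eqVlt => /predU1P[-> //|]; rewrite ltnS => /IH h.
by rewrite RejS (le_trans h) // lerDl delta_ge0.
Qed.

Lemma measurable_delta j : measurable_fun setT (delta alpha e j).
Proof.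
apply: measurable_fun_ifT => //; apply: measurable_and.
  exact: measurable_fun_ltr.
by apply: measurable_fun_ler => //; exact/measurable_funM/measurable_funV.
Qed.

Lemma filt_gen_measurable t : filt_gen t `<=` measurable.
Proof.
move=> _ [j [B [_ mB ->]]]; rewrite -[_ @^-1` _]setTI.
exact: measurable_delta.
Qed.

Lemma measurable_fun_filt t (f : T -> R) : meas_wrt (filt alpha e t) f ->
  measurable_fun [set: FT t] f.
Proof. by move=> h _ B mB; rewrite setTI; exact: h. Qed.

Lemma measurable_delta_filt t j : (1 <= j <= t)%N ->
  measurable_fun [set: FT t] (delta alpha e j).
Proof.
by move=> jt _ B mB; rewrite setTI; apply: sub_sigma_algebra; exists j, B.
Qed.

Lemma measurable_Rej_filt t t' : (t' <= t)%N ->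
  measurable_fun [set: FT t] (Rej alpha e t').
Proof.
elim: t' => [|t' IH] t't.
  by rewrite (_ : Rej _ _ 0 = cst 0); last by apply/funext => w; rewrite /Rej big_geq.
rewrite (_ : Rej _ _ t'.+1 = Rej alpha e t' \+ delta alpha e t'.+1).
  by apply: measurable_funD; [apply: IH; exact: ltnW | exact: measurable_delta_filt].
by apply/funext => w; rewrite RejS.
Qed.

Lemma measurable_Rej t : measurable_fun setT (Rej alpha e t).
Proof.
apply: (measurable_fun_sigma_sub (G := filt_gen t)).
  exact: filt_gen_measurable.
exact: measurable_Rej_filt.
Qed.

End filtration.

Section online_fdr_control.
Context d (T : measurableType d) (R : realType) (P : probability T R).
Variables (theta : nat -> bool) (e alpha lambda : nat -> T -> R).
Hypothesis me : forall t, measurable_fun setT (e t).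
Hypothesis e_ge0 : forall t w, 0 <= e t w.
Hypothesis malpha : forall t, measurable_fun setT (alpha t).
Hypothesis alpha_ge0 : forall t w, 0 <= alpha t w.
Hypothesis alpha_predictable :
  forall t, (1 <= t)%N -> meas_wrt (filt alpha e t.-1) (alpha t).
Hypothesis e_valid : forall t, (1 <= t)%N -> ~~ theta t ->
  forall A, filt alpha e t.-1 A -> (\int[P]_(w in A) (e t w)%:E <= P A)%E.
Hypothesis mlambda : forall t, measurable_fun setT (lambda t).
Hypothesis lambda01 : forall t w, 0 < lambda t w < 1.
Hypothesis lambda_predictable :
  forall t, (1 <= t)%N -> meas_wrt (filt alpha e t.-1) (lambda t).

Local Notation FT t := (g_sigma_algebraType (filt_gen alpha e t)).

Definition scaled_level j w := alpha j w / (Rej alpha e j.-1 w + 1).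

Definition saffron_term j w := scaled_level j w *
  ((if e j w < 1 / lambda j w then 1 else 0) / (1 - lambda j w)).

Definition null_indices t := [seq j <- index_iota 1 t.+1 | ~~ theta j].

Lemma scaled_level_ge0 j w : 0 <= scaled_level j w.
Proof. by rewrite divr_ge0 // ltW // Rej_add1_gt0. Qed.

Lemma measurable_scaled_level j : measurable_fun setT (scaled_level j).
Proof.
by apply/measurable_funM/measurable_funV/measurable_funD => //; exact: measurable_Rej.
Qed.

Lemma measurable_scaled_level_filt j : (1 <= j)%N ->
  measurable_fun [set: FT j.-1] (scaled_level j).
Proof.
move=> j1; apply: measurable_funM.
  by apply: measurable_fun_filt; exact: alpha_predictable.
by apply/measurable_funV/measurable_funD => //; exact: measurable_Rej_filt.
Qed.

Lemma saffron_term_ge0 j w : 0 <= saffron_term j w.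
Proof.
apply: mulr_ge0; first exact: scaled_level_ge0.
apply: divr_ge0; first by case: ifP.
by case/andP: (lambda01 j w) => _; rewrite subr_ge0 => /ltW.
Qed.

Lemma measurable_saffron_term j : measurable_fun setT (saffron_term j).
Proof.
apply/measurable_funM; first exact: measurable_scaled_level.
apply: measurable_funM; first exact: measurable_fun_lt_inv.
exact/measurable_funV/measurable_funB.
Qed.

Lemma integral_FDPstar t : (\int[P]_w (FDPstar theta alpha e t w)%:E =
  \sum_(j <- null_indices t) \int[P]_w (scaled_level j w)%:E)%E.
Proof.
rewrite -ge0_integral_sum //.
- by apply: eq_integral => w _; rewrite /FDPstar -big_filter sumEFin.
- by move=> j; apply/measurable_EFinP; exact: measurable_scaled_level.
- by move=> j w _; rewrite lee_fin scaled_level_ge0.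
Qed.

Lemma FDPstar_le_FDPhat t : (\int[P]_w (FDPstar theta alpha e t w)%:E <=
  \int[P]_w (FDPhat_saffron alpha e lambda t w)%:E)%E.
Proof.
rewrite integral_FDPstar.
apply: (@le_trans _ _ (\sum_(j <- null_indices t) \int[P]_w (saffron_term j w)%:E)%E).
  rewrite !big_seq; apply: lee_sum => j.
  rewrite mem_filter mem_index_iota => /andP[null_j /andP[j1 _]].
  apply: (integral_le_saffron (G := filt_gen alpha e j.-1)) => //.
  - exact: filt_gen_measurable.
  - exact: e_valid.
  - exact: measurable_scaled_level_filt.
  - exact: scaled_level_ge0.
  - by apply: measurable_fun_filt; exact: lambda_predictable.
rewrite -ge0_integral_sum //; first last.
- by move=> j w _; rewrite lee_fin saffron_term_ge0.
- by move=> j; apply/measurable_EFinP; exact: measurable_saffron_term.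
apply: ge0_le_integral => //.
- by move=> w _; rewrite sume_ge0 // => j _; rewrite lee_fin saffron_term_ge0.
- by apply: emeasurable_sum => j; apply/measurable_EFinP; exact: measurable_saffron_term.
- by apply/measurable_EFinP/measurable_sum => j; exact: measurable_saffron_term.
move=> w _; rewrite sumEFin lee_fin big_filter big_mkcond.
by apply: ler_sum => j _; case: ifP => // _; exact: saffron_term_ge0.
Qed.

Lemma FDP_le_weighted_evalues t w :
  FDP theta alpha e t w <= \sum_(j <- null_indices t) scaled_level j w * e j w.
Proof.
rewrite /FDP -big_filter mulr_suml !big_seq; apply: ler_sum => j.
rewrite mem_filter mem_index_iota => /andP[_ /andP[j1 jt]].
have [->|delta1] := delta01 alpha e j w.
  by rewrite mul0r mulr_ge0 ?scaled_level_ge0.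
have /andP[alpha_gt0 alpha_e] : (0 < alpha j w) && (1 / alpha j w <= e j w).
  by move: delta1; rewrite /delta; case: ifP => // _ /eqP; rewrite eq_sym oner_eq0.
have Rej_le_max : Rej alpha e j.-1 w + 1 <= Num.max (Rej alpha e t w) 1.
  have := RejS alpha e j.-1 w; rewrite prednK // delta1 => <-.
  by rewrite le_max Rej_le.
have R1_gt0 := Rej_add1_gt0 alpha e j.-1 w.
rewrite delta1 (@le_trans _ _ (1 / (Rej alpha e j.-1 w + 1))) //.
  by rewrite !div1r lef_pV2 ?posrE ?lt_max ?ltr01 ?orbT.
rewrite /scaled_level mulrAC div1r ler_peMl ?invr_ge0 ?(ltW R1_gt0) //.
by rewrite mulrC -ler_pdivrMr.
Qed.

Lemma FDP_ge0 t w : 0 <= FDP theta alpha e t w.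
Proof.
rewrite divr_ge0 ?le_max ?ler01 ?orbT //.
by apply: sumr_ge0 => j _; exact: delta_ge0.
Qed.

Lemma measurable_FDP t : measurable_fun setT (FDP theta alpha e t).
Proof.
apply: measurable_funM.
  rewrite (_ : (fun w => _) = fun w => \sum_(j <- null_indices t) delta alpha e j w).
    by apply: measurable_sum => j; exact: measurable_delta.
  by apply/funext => w; rewrite big_filter.
by apply/measurable_funV/measurable_maxr => //; exact: measurable_Rej.
Qed.

Lemma FDPhat_ge0 t w : 0 <= FDPhat_saffron alpha e lambda t w.
Proof. by apply: sumr_ge0 => j _; exact: saffron_term_ge0. Qed.

Lemma measurable_FDPhat t : measurable_fun setT (FDPhat_saffron alpha e lambda t).
Proof. by apply: measurable_sum => j; exact: measurable_saffron_term. Qed.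

Lemma FDR_le_FDPstar t : (\int[P]_w (FDP theta alpha e t w)%:E <=
  \int[P]_w (FDPstar theta alpha e t w)%:E)%E.
Proof.
rewrite integral_FDPstar.
apply: (@le_trans _ _
    (\sum_(j <- null_indices t) \int[P]_w (scaled_level j w * e j w)%:E)%E).
  rewrite -ge0_integral_sum //; first last.
  - by move=> j w _; rewrite lee_fin mulr_ge0 ?scaled_level_ge0.
  - by move=> j; apply/measurable_EFinP/measurable_funM => //; exact: measurable_scaled_level.
  apply: ge0_le_integral => //.
  - by move=> w _; rewrite lee_fin FDP_ge0.
  - exact/measurable_EFinP/measurable_FDP.
  - apply: emeasurable_sum => j; apply/measurable_EFinP/measurable_funM => //.
    exact: measurable_scaled_level.
  by move=> w _; rewrite sumEFin lee_fin FDP_le_weighted_evalues.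
rewrite !big_seq; apply: lee_sum => j.
rewrite mem_filter mem_index_iota => /andP[null_j /andP[j1 _]].
apply: (integral_mul_evalue_le (G := filt_gen alpha e j.-1)) => //.
- exact: filt_gen_measurable.
- exact: e_valid.
- exact: measurable_scaled_level_filt.
- exact: scaled_level_ge0.
Qed.

End online_fdr_control.
Theorem proposition2 (d : measure_display) (T : measurableType d) (R : realType)
  (P : probability T R) (a : R) (theta : nat -> bool)
  (e alpha lambda : nat -> T -> R) :
  (0 < a < 1) ->
  (forall t, measurable_fun setT (e t)) ->
  (forall t w, 0 <= e t w) ->
  (forall t, measurable_fun setT (alpha t)) ->
  (forall t w, 0 <= alpha t w) ->
  (forall t, (1 <= t)%N -> meas_wrt (filt alpha e t.-1) (alpha t)) ->
  (* validity: E[e_t | F_{t-1}] <= 1 a.s. for null t, i.e.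
     int_A e_t dP <= P(A) for every A in F_{t-1} *)
  (forall t, (1 <= t)%N -> ~~ theta t ->
     forall A, filt alpha e t.-1 A ->
       (\int[P]_(w in A) (e t w)%:E <= P A)%E) ->
  (forall t, measurable_fun setT (lambda t)) ->
  (forall t w, 0 < lambda t w < 1) ->
  (forall t, (1 <= t)%N -> meas_wrt (filt alpha e t.-1) (lambda t)) ->
  (forall t, (1 <= t)%N ->
     (\int[P]_w (FDPhat_saffron alpha e lambda t w)%:E
        >= \int[P]_w (FDPstar theta alpha e t w)%:E)%E)
  /\
  ((forall t, (1 <= t)%N -> {ae P, forall w, FDPhat_saffron alpha e lambda t w <= a}) ->
   forall t, (1 <= t)%N -> (\int[P]_w (FDP theta alpha e t w)%:E <= a%:E)%E).
Proof.
move=> /andP[a_gt0 _] me e_ge0 malpha alpha_ge0 alpha_pred e_valid mlambda lambda01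
  lambda_pred.
have star_le_hat t := FDPstar_le_FDPhat me e_ge0 malpha alpha_ge0 alpha_pred e_valid
  mlambda lambda01 lambda_pred t.
split=> [t _|hat_le_a t t1]; first exact: star_le_hat.
apply: le_trans (FDR_le_FDPstar me e_ge0 malpha alpha_ge0 alpha_pred e_valid t) _.
apply: le_trans (star_le_hat t) _.
apply: integral_le_ae_bound (ltW a_gt0) _ _ (hat_le_a t t1).
- exact: measurable_FDPhat me malpha mlambda t.
- exact: FDPhat_ge0 alpha_ge0 lambda01 t.
Qed.
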